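(* Let $\mathit{VI}$ be a finite set of variables with $\#\mathit{VI}=n$. For each $sh_1,sh_2\in\mathit{SH}$, each $V\in\wp(\mathit{VI})$ and each $k\in\mathbb{N}$ with $1<k\le n$: if $\rho_{\mathit{TSD}_k}(sh_1)\subseteq\rho_{\mathit{TSD}_k}(sh_2)$ then $\mathrm{rel}(V,sh_1)^\star\subseteq\mathrm{rel}(V,sh_2)^\star$.
   Context: $\mathit{SG}=\wp(\mathit{VI})\setminus\{\emptyset\}$, $\mathit{SH}=\wp(\mathit{SG})$. $\rho_{\mathit{TSD}_k}(sh)=\{\,S\in\mathit{SG}\mid \forall T\subseteq S:\ \#T<k\implies S=\bigcup\{U\in sh\mid T\subseteq U\subseteq S\}\,\}$. $\mathrm{rel}(V,sh)=\{S\in sh\mid S\cap V\ne\emptyset\}$; $sh^\star=\{S\in\mathit{SG}\mid\exists sh'\subseteq sh: S=\bigcup sh'\}$. *)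

From mathcomp Require Import all_boot.
Set Implicit Arguments. Unset Strict Implicit. Unset Printing Implicit Defensive.

Definition SG (VI : finType) : {set {set VI}} := [set S : {set VI} | S != set0].

Definition is_SH (VI : finType) (sh : {set {set VI}}) : Prop := sh \subset SG VI.

Definition rho_TSD (VI : finType) (k : nat) (sh : {set {set VI}}) : {set {set VI}} :=
  [set S in SG VI | [forall T : {set VI},
     (T \subset S) ==> (#|T| < k) ==>
     (S == \bigcup_(U in sh | (T \subset U) && (U \subset S)) U)]].

Definition relSh (VI : finType) (V : {set VI}) (sh : {set {set VI}}) : {set {set VI}} :=
  [set S in sh | S :&: V != set0].

Definition star (VI : finType) (sh : {set {set VI}}) : {set {set VI}} :=
  [set S in SG VI | [exists sh' : {set {set VI}},
     (sh' \subset sh) && (S == \bigcup_(U in sh') U)]].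

Arguments SG : clear implicits.
Arguments rho_TSD {VI} k sh.
Arguments relSh {VI} V sh.
Arguments star {VI} sh.
Arguments is_SH {VI} sh.

From mathcomp Require Import all_boot.

(* An element [S] of [sh^*] is exactly a nonempty set covered by the members of
   [sh] it contains.  A group [U] of [rel(V, sh1)] lies in [rho_TSD_k(sh1)],
   hence in [rho_TSD_k(sh2)]; as [k > 1], every pair [{x, v}] of points of [U]
   lies in some [W] of [sh2] with [W \subset U].  Choosing [v] in [U :&: V]
   makes [W] a member of [rel(V, sh2)], so the covers of [S] by [rel(V, sh1)]
   transfer to covers by [rel(V, sh2)]. *)

Section Star.

Context {VI : finType}.
Implicit Types (sh : {set {set VI}}) (S : {set VI}).

Lemma starP sh S :
  reflect (S != set0 /\ {in S, forall x, exists2 U, U \in sh & x \in U /\ U \subset S})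
          (S \in star sh).
Proof.
rewrite /star !inE; apply: (iffP andP) => -[S_n0 cover]; split=> //.
  move=> x xS; case/existsP: cover => sh' /andP[/subsetP sub_sh' /eqP defS].
  move: xS; rewrite {1}defS => /bigcupP[U U_sh' xU].
  by exists U; [apply: sub_sh' | split; last by rewrite defS (bigcup_max U)].
apply/existsP; exists [set U in sh | U \subset S].
rewrite eqEsubset; apply/and3P; split.
- by apply/subsetP=> U; rewrite inE => /andP[].
- by apply/subsetP=> x /cover[U U_sh [xU US]]; apply/bigcupP; exists U; rewrite ?inE ?U_sh.
- by apply/bigcupsP=> U; rewrite inE => /andP[].
Qed.

End Star.

Section RhoTSD.

Context {VI : finType} {k : nat}.
Implicit Types (sh : {set {set VI}}) (S : {set VI}).

Lemma sub_rho_TSD {sh} : is_SH sh -> sh \subset rho_TSD k sh.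
Proof.
move=> /subsetP shSG; apply/subsetP=> S Ssh; rewrite inE shSG //=.
apply/forallP=> T; apply/implyP=> TS; apply/implyP=> _.
rewrite eqEsubset; apply/andP; split.
  by apply: (bigcup_max S); rewrite ?Ssh ?TS ?subxx.
by apply/bigcupsP=> U /andP[_ /andP[_ ->]].
Qed.

Lemma rho_TSD_pair_cover {sh S x v} :
  1 < k -> S \in rho_TSD k sh -> x \in S -> v \in S ->
  exists2 W, W \in sh & [/\ x \in W, v \in W & W \subset S].
Proof.
move=> k_gt1; rewrite inE => /andP[_ /forallP/(_ [set x])].
rewrite cards1 k_gt1 sub1set => saturated xS vS.
have {}saturated := implyP saturated xS.
move: vS; rewrite {1}(eqP saturated) => /bigcupP[W /andP[Wsh /andP[xW WS]] vW].
by exists W; rewrite // -sub1set.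
Qed.

End RhoTSD.

Theorem lemma3p19 (VI : finType) (n : nat) (hn : #|VI| = n)
  (sh1 sh2 : {set {set VI}}) (h1 : is_SH sh1) (h2 : is_SH sh2)
  (V : {set VI}) (k : nat) (hk1 : 1 < k) (hkn : k <= n) :
  rho_TSD k sh1 \subset rho_TSD k sh2 ->
  star (relSh V sh1) \subset star (relSh V sh2).
Proof.
move=> rho_sub; apply/subsetP=> S /starP[S_n0 cover1]; apply/starP; split=> // x xS.
have [U] := cover1 x xS; rewrite inE => /andP[Ush1 /set0Pn[v]].
rewrite inE => /andP[vU vV] [xU US].
have Urho2 : U \in rho_TSD k sh2 := subsetP rho_sub _ (subsetP (sub_rho_TSD h1) _ Ush1).
have [W Wsh2 [xW vW WU]] := rho_TSD_pair_cover hk1 Urho2 xU vU.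
exists W; last by split; last exact: subset_trans US.
by rewrite inE Wsh2; apply/set0Pn; exists v; rewrite inE vW.
Qed.
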